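(* Let $k\ge2$, $p\in(0,1)$, $q=1-p$. For all $n\ge1$, $$f^{(k)}_n=p^{(k-1)n}\sum_{i=0}^{n-1}\frac{n-i}{n}\binom{(k-1)n+i-1}{i}q^i.$$
   Context: Let $s^{(k)}_i=\frac{k-1}{ki-1}\binom{ki-1}{i-1}$ ($i\ge1$), $S^{(k)}(z)=\sum_{i\ge1}s^{(k)}_iz^i$, and define $f^{(k)}_0,f^{(k)}_1,\dots$ by the formal power series identity $\sum_{i\ge0}f^{(k)}_iz^i=\dfrac{1}{1-\frac1qS^{(k)}(p^{k-1}qz)}$. (In the $k$-box matchbox process with big-chooser probability $p$ and little-chooser probability $q$, $f^{(k)}_n$ is the probability that after $kn$ steps all boxes contain equal numbers of matches.) *)

From mathcomp Require Import all_boot all_order all_algebra.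
Set Implicit Arguments. Unset Strict Implicit. Unset Printing Implicit Defensive.
Import Order.TTheory GRing.Theory Num.Theory.
Local Open Scope ring_scope.

Definition scoef {R : fieldType} (k i : nat) : R :=
  (k.-1)%:R / (k * i).-1%:R * ('C((k * i).-1, i.-1))%:R.

(* Coefficient of z^i in the formal power series (1/q) S^(k)(p^(k-1) q z);
   the constant coefficient is 0 since S has no constant term. *)
Definition Gcoef {R : fieldType} (k : nat) (p q : R) (i : nat) : R :=
  if i is 0 then 0 else q^-1 * scoef k i * (p ^+ k.-1 * q) ^+ i.

(* f is the coefficient sequence of 1 / (1 - G(z)), i.e. the formal power
   series identity F(z) * (1 - G(z)) = 1, written coefficientwise. *)
Definition is_f_seq {R : fieldType} (k : nat) (p q : R) (f : nat -> R) : Prop :=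
  forall n : nat,
    f n - \sum_(i < n.+1) Gcoef k p q i * f (n - i)%N = (n == 0%N)%:R.

From mathcomp Require Import all_boot all_order all_algebra.
From mathcomp Require Import zify ring.
Import Order.TTheory GRing.Theory Num.Theory.
Local Open Scope ring_scope.

(* Dividing out the powers of p, h_n := f_n / p^((k-1)n) satisfies
   h_(N+1) = sum_i s_(i+1) q^i h_(N-i).  Both s_(j+1) and the coefficient
   (n-j)/n C((k-1)n+j-1, j) of the claimed formula are values of Rothe's
   coefficients A_t(x) = x/(x+kt) C(x+kt, t), at x = k-1 and x = (k-1)(n-j)
   respectively, so the claimed closed form satisfies the recurrence by the
   Hagen-Rothe convolution  sum_t A_t(x) A_(n-t)(y) = A_n(x+y). *)

(* [rothe b t x] is x/(x+bt) C(x+bt, t), written without division so that it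
   also makes sense at x = 0 (where it is [t == 0]). *)
Definition rothe {R : fieldType} (b t x : nat) : R :=
  if t is t'.+1 then ('C(x + b * t, t))%:R - (b * 'C((x + b * t).-1, t'))%:R
  else 1.
Arguments rothe : simpl never.

Lemma bin_mul_diag b t : 'C(b * t.+1, t.+1) = (b * 'C((b * t.+1).-1, t))%N.
Proof.
apply/eqP; rewrite -(eqn_pmul2l (ltn0Sn t)) -mul_bin_diag.
by rewrite -mulnA mulnCA.
Qed.

Lemma rothe_x0 {R : fieldType} b t : rothe b t 0 = (t == 0%N)%:R :> R.
Proof. by case: t => [|t] //; rewrite /rothe add0n bin_mul_diag subrr. Qed.

Section Rothe.
Variables (R : fieldType) (b : nat).
Hypothesis b_gt0 : (0 < b)%N.

Lemma rotheSx t x :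
  rothe b t x.+1 = rothe b t x + (if t is t'.+1 then rothe b t' (x + b) else 0) :> R.
Proof.
case: t => [|[|t]]; first by rewrite addr0.
  rewrite /rothe !muln1 !bin1 !bin0 !muln1 addSn -addn1 natrD; ring.
rewrite /rothe.
have -> : (x.+1 + b * t.+2 = (x + b * t.+2).+1)%N by lia.
have -> : (x + b + b * t.+1 = x + b * t.+2)%N by lia.
rewrite /= binS.
set N := (x + b * t.+2)%N.
have binN : 'C(N, t.+1) = ('C(N.-1, t.+1) + 'C(N.-1, t))%N.
  by rewrite -binS prednK // /N; lia.
rewrite [X in (b * X)%N]binN !mulnDr !natrD; ring.
Qed.

Lemma rothe_conv n x y :
  \sum_(t < n.+1) rothe b t x * rothe b (n - t) y = rothe b n (x + y) :> R.
Proof.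
elim: n x y => [|n IHn] x y; first by rewrite big_ord1 /= mul1r.
elim: x => [|x IHx].
  rewrite big_ord_recl subn0 mul1r big1 ?addr0 // => i _.
  by rewrite rothe_x0 mul0r.
under eq_bigr => i _ do rewrite rotheSx mulrDl.
rewrite big_split /= IHx big_ord_recl /= mul0r add0r.
under eq_bigr => i _ do rewrite subSS.
by rewrite IHn addSn rotheSx addnAC.
Qed.

End Rothe.

Lemma scoef_rothe {R : numFieldType} k j : (2 <= k)%N ->
  scoef k j.+1 = rothe k j k.-1 :> R.
Proof.
case: k => [|[|c]] // _; rewrite /scoef.
case: j => [|j].
  by rewrite muln1 bin0 mulr1 /= divff // pnatr_eq0.
set N := (c.+2 * j.+2).-1.
have defN : N = (c.+1 + c.+2 * j.+1)%N by rewrite /N; lia.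
rewrite /rothe /= -defN.
have -> : (c + c.+2 * j.+1 = N.-1)%N by rewrite defN; lia.
have := mul_bin_diag N j; set A := 'C(N, j.+1); set B := 'C(_, j) => diag.
have diagR : (N%:R * B%:R = (j.+1)%:R * A%:R :> R) by rewrite -!natrM diag.
have N_neq0 : (N%:R != 0 :> R) by rewrite pnatr_eq0 defN.
have NR : (N%:R = (c.+2)%:R * (j.+2)%:R - 1 :> R).
  by rewrite -natrM -[(c.+2 * j.+2)%N]prednK // -/N -natr1 addrK.
apply: (mulfI N_neq0); rewrite natrM mulrA mulrCA divff // mulr1 mulrBr.
by rewrite mulrCA diagR NR -!natr1; ring.
Qed.

Lemma coef_rothe {R : numFieldType} k n j : (2 <= k)%N -> (j < n)%N ->
  (n - j)%:R / n%:R * ('C((k.-1 * n + j).-1, j))%:R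
  = rothe k j (k.-1 * (n - j)) :> R.
Proof.
case: k => [|[|c]] // _ lt_jn.
have n_neq0 : (n%:R != 0 :> R) by rewrite pnatr_eq0; lia.
case: j lt_jn => [|j] lt_jn; first by rewrite subn0 bin0 mulr1 divff.
rewrite /rothe /=.
set M := (c.+1 * n)%N.
have -> : (c.+1 * (n - j.+1) + c.+2 * j.+1 = (M + j).+1)%N by rewrite /M; lia.
have -> : ((M + j.+1).-1 = M + j)%N by lia.
rewrite binS.
have := mul_bin_left (M + j) j; rewrite (_ : M + j - j = M)%N; last by lia.
set A := 'C(M + j, j.+1); set B := 'C(M + j, j) => left.
have leftR : ((j.+1)%:R * A%:R = M%:R * B%:R :> R) by rewrite -!natrM left.
apply: (mulfI n_neq0); rewrite mulrA mulrCA divff // mulr1.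
by rewrite natrB; [rewrite mulrBl leftR /M natrM -!natr1; ring | lia].
Qed.

Lemma big_ord_triangle {R : zmodType} (F : nat -> nat -> R) n :
  \sum_(i < n) \sum_(j < n - i) F i j = \sum_(u < n) \sum_(t < u.+1) F t (u - t)%N.
Proof.
elim: n => [|n IH]; first by rewrite !big_ord0.
rewrite big_ord_recr /= [RHS]big_ord_recr /= -IH subSnn big_ord1.
rewrite [\sum_(t < n.+1) _]big_ord_recr /= subnn addrA; congr (_ + _).
rewrite -big_split /=; apply: eq_bigr => i _.
by rewrite subSn ?big_ord_recr //= ltnW.
Qed.

Definition hseq {R : fieldType} (k : nat) (q : R) (n : nat) : R :=
  \sum_(u < n.+1) q ^+ u * rothe k u (k.-1 * (n - u)).

Lemma hseqS {R : numFieldType} k (q : R) N : (2 <= k)%N ->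
  hseq k q N.+1 = \sum_(i < N.+1) scoef k i.+1 * q ^+ i * hseq k q (N - i).
Proof.
move=> k_ge2; have k_gt0 : (0 < k)%N by lia.
pose F i j := rothe k i k.-1 * q ^+ (i + j) * (rothe k j (k.-1 * (N - i - j)) : R).
transitivity (\sum_(i < N.+1) \sum_(j < N.+1 - i) F i j); last first.
  apply: eq_bigr => i _; rewrite scoef_rothe // /hseq -subSn; last by rewrite -ltnS.
  by rewrite big_distrr /=; apply: eq_bigr => j _; rewrite /F exprD; ring.
rewrite big_ord_triangle /hseq big_ord_recr /= subnn muln0 rothe_x0 mulr0 addr0.
apply: eq_bigr => u _; have le_uN : (u <= N)%N by rewrite -ltnS.
rewrite /F.
under eq_bigr => t _.
  rewrite subnKC; last by rewrite -ltnS.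
  rewrite (_ : N - t - (u - t) = N - u)%N; last by have := ltn_ord t; lia.
  over.
under [RHS]eq_bigr => t _ do rewrite mulrAC.
rewrite -big_distrl /= rothe_conv // mulrC; congr (_ * _); congr (rothe _ _ _).
by rewrite subSn // mulnS.
Qed.

Lemma is_f_seq0 {R : fieldType} {k : nat} {p q : R} {f : nat -> R} :
  is_f_seq k p q f -> f 0%N = 1.
Proof. by move/(_ 0%N); rewrite big_ord1 mul0r subr0. Qed.

Lemma is_f_seqS {R : fieldType} {k : nat} {p q : R} {f : nat -> R} :
  is_f_seq k p q f -> forall N, f N.+1 = \sum_(i < N.+1) Gcoef k p q i.+1 * f (N - i)%N.
Proof.
move=> fP N; have /eqP := fP N.+1.
by rewrite big_ord_recl /= mul0r add0r subr_eq add0r => /eqP.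
Qed.

Lemma is_f_seqE {R : numFieldType} {k : nat} {p q : R} {f : nat -> R} :
  (2 <= k)%N -> q != 0 -> is_f_seq k p q f ->
  forall n, f n = p ^+ (k.-1 * n) * hseq k q n.
Proof.
move=> k_ge2 q_neq0 fP; elim/ltn_ind => [[|N]] IH.
  by rewrite (is_f_seq0 fP) muln0 mul1r /hseq big_ord1 mul1r.
rewrite (is_f_seqS fP) hseqS // big_distrr /=; apply: eq_bigr => i _.
have le_iN : (i <= N)%N by rewrite -ltnS.
rewrite IH; last by lia.
have -> : (k.-1 * N.+1 = k.-1 * i.+1 + k.-1 * (N - i))%N.
  by rewrite -mulnDr; congr (_ * _); lia.
by rewrite /Gcoef exprD exprMn -exprM exprS; field.
Qed.

Theorem proposition5p7 (R : realFieldType) (k : nat) (p q : R) (f : nat -> R) :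
  (2 <= k)%N -> 0 < p -> p < 1 -> q = 1 - p ->
  is_f_seq k p q f ->
  forall n : nat, (1 <= n)%N ->
    f n = p ^+ (k.-1 * n) *
          \sum_(i < n) ((n - i)%:R / n%:R *
                        ('C((k.-1 * n + i).-1, i))%:R * q ^+ i).
Proof.
move=> k_ge2 _ p_lt1 -> fP n n_ge1.
have q_neq0 : 1 - p != 0 by rewrite subr_eq0 eq_sym lt_eqF.
rewrite (is_f_seqE k_ge2 q_neq0 fP n) /hseq big_ord_recr /= subnn muln0 rothe_x0.
rewrite (_ : (n == 0%N) = false); last by lia.
rewrite mulr0 addr0; congr (_ * _); apply: eq_bigr => i _.
by rewrite coef_rothe // mulrC.
Qed.
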